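(* Suppose that (A1) and (V4') hold, and let $\theta^*\in\mathbb{R}^d$ satisfy $\bar f(\theta^* )=0$. Then there are positive constants $\delta_1$, $b$ and $c$ such that every solution of $\frac{d}{dt}\vartheta_t=\bar f(\vartheta_t)$ satisfies, with $\tilde\vartheta_t=\vartheta_t-\theta^*$, $$\|\tilde\vartheta_t\|\le b\|\tilde\vartheta_0\|e^{-\delta_1t}\qquad\text{for all } 0\le t\le\tau_c,\quad \tau_c=\min\{t\ge0:\|\tilde\vartheta_t\|\le c\}.$$
   Context: $\bar f\colon\mathbb{R}^d\to\mathbb{R}^d$ is the mean vector field of a QSA ODE $\frac{d}{dt}\Theta_t=\alpha f(\Theta_t,\xi_t)$, where $\xi_t$ is an almost periodic probing signal and $\bar f(\theta)$ is the time average of $f(\theta,\xi_t)$. (A1): there is $L_f<\infty$ with $\|\bar f(\theta')-\bar f(\theta)\|\le L_f\|\theta'-\theta\|$ and $\|f(\theta',\xi)-f(\theta,\xi)\|+\|f(\theta,\xi')-f(\theta,\xi)\|\le L_f[\|\theta'-\theta\|+\|\xi'-\xi\|]$ for all arguments. (V4'): there exist $V\colon\mathbb{R}^d\to\mathbb{R}_+$ and constants $L_V<\infty$, $\delta_0,\delta,T>0$ such that $|V(\theta')-V(\theta)|\le L_V\|\theta'-\theta\|$ for all $\theta,\theta'$, $V(\theta)\ge\|\theta\|$ when $\|\theta\|\ge\delta_0^{-1}$, and every solution of $\frac{d}{dt}\vartheta=\bar f(\vartheta)$ satisfies $V(\vartheta_{\tau+T})-V(\vartheta_\tau)\le-\delta\|\vartheta_\tau\|$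 for all $\tau\ge0$ with $\|\vartheta_\tau\|>\delta^{-1}$. If the set defining $\tau_c$ is empty, $\tau_c=\infty$. *)

From HB Require Import structures.
From mathcomp Require Import all_boot all_order all_algebra.
From mathcomp Require Import all_classical all_reals all_analysis.
Set Implicit Arguments. Unset Strict Implicit. Unset Printing Implicit Defensive.
Import Order.TTheory GRing.Theory Num.Theory.
Import numFieldNormedType.Exports.
Local Open Scope classical_set_scope.
Local Open Scope ring_scope.

Definition enorm {R : realType} {d : nat} (v : 'rV[R]_d) : R :=
  Num.sqrt (\sum_(i < d) v ord0 i ^+ 2).

Definition is_mean_ode_solution {R : realType} {d : nat}
  (fbar : 'rV[R]_d -> 'rV[R]_d) (theta : R -> 'rV[R]_d) : Prop :=
  {within `[0, +oo[, continuous theta} /\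
  (forall t : R, 0 < t -> is_derive t 1 theta (fbar (theta t))).

(* tau_c = min { t >= 0 : || theta_t - thstar || <= c }, +oo if empty
   (taken as an infimum in the extended reals; the set is closed, so the
   infimum is attained whenever the set is nonempty). *)
Definition tau_c {R : realType} {d : nat} (theta : R -> 'rV[R]_d)
  (thstar : 'rV[R]_d) (c : R) : \bar R :=
  ereal_inf [set t%:E | t in [set t : R | 0 <= t /\ enorm (theta t - thstar) <= c]].

(* Since fbar is Lipschitz and vanishes at the equilibrium, ||fbar th|| <= L ||th - thstar||,
   and Gronwall's inequality lets ||vth_t - thstar|| grow by at most the factor e^(L s) over
   any window of length s.  Before tau_c the state is far from thstar, hence so large that
   (V4') applies at every grid time j T and, V being Lipschitz, V <= K ||th||; the drift
   then contracts V by the factor 1 - delta/K over each period T.  As ||th - thstar|| <= 2 V th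
   there and V (vth 0) <= K ||vth 0 - thstar||, this geometric decay at grid times carries over
   to every t <= tau_c through the Gronwall bound on one period. *)
From HB Require Import structures.
From mathcomp Require Import all_boot all_order all_algebra.
From mathcomp Require Import all_classical all_reals all_analysis.
From mathcomp Require Import ring lra.
Set Implicit Arguments. Unset Strict Implicit. Unset Printing Implicit Defensive.
Import Order.TTheory GRing.Theory Num.Theory.
Import numFieldNormedType.Exports.
Local Open Scope classical_set_scope.
Local Open Scope ring_scope.

Section EuclideanNorm.
Context {R : realType} {d : nat}.
Implicit Types u v : 'rV[R]_d.

Lemma enorm_ge0 v : 0 <= enorm v.
Proof. exact: sqrtr_ge0. Qed.

Lemma enorm_sqr v : enorm v ^+ 2 = \sum_(i < d) v ord0 i ^+ 2.
Proof. by rewrite /enorm sqr_sqrtr // sumr_ge0 // => i _; rewrite sqr_ge0. Qed.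

Lemma enormN v : enorm (- v) = enorm v.
Proof. by rewrite /enorm; under eq_bigr do rewrite mxE sqrrN. Qed.

Lemma CauchySchwarz_sqr u v : (\sum_(i < d) u ord0 i * v ord0 i) ^+ 2 <=
  (\sum_(i < d) u ord0 i ^+ 2) * (\sum_(i < d) v ord0 i ^+ 2).
Proof.
set A := \sum_(i < d) _ ^+ 2; set B := \sum_(i < d) _ ^+ 2; set P := \sum_(i < d) _.
have B_ge0 : 0 <= B by apply: sumr_ge0 => i _; rewrite sqr_ge0.
have [B0|B_neq0] := eqVneq B 0.
  have v0 i : v ord0 i = 0.
    apply/eqP; rewrite -sqrf_eq0; move/eqP: B0.
    rewrite psumr_eq0 => [/allP/(_ i (mem_index_enum _))//|j _].
    exact: sqr_ge0.
  rewrite /P big1 ?expr0n ?mulr_ge0 //= => [|i _]; last by rewrite v0 mulr0.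
  by apply: sumr_ge0 => i _; rewrite sqr_ge0.
have expand s t : \sum_(i < d) (s * u ord0 i - t * v ord0 i) ^+ 2 =
    s ^+ 2 * A - 2 * s * t * P + t ^+ 2 * B.
  rewrite /A /B /P !mulr_sumr -sumrN -!big_split /=.
  by apply: eq_bigr => i _; ring.
have : 0 <= \sum_(i < d) (B * u ord0 i - P * v ord0 i) ^+ 2.
  by apply: sumr_ge0 => i _; rewrite sqr_ge0.
rewrite expand.
have -> : B ^+ 2 * A - 2 * B * P * P + P ^+ 2 * B = B * (A * B - P ^+ 2) by ring.
by rewrite pmulr_rge0 ?subr_ge0 // lt_def B_neq0.
Qed.

Lemma CauchySchwarz u v : \sum_(i < d) u ord0 i * v ord0 i <= enorm u * enorm v.
Proof.
apply: le_trans (ler_norm _) _.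
rewrite -sqrtr_sqr /enorm -sqrtrM ?ler_sqrt ?CauchySchwarz_sqr //.
  by rewrite mulr_ge0 // sumr_ge0 // => i _; rewrite sqr_ge0.
by apply: sumr_ge0 => i _; rewrite sqr_ge0.
Qed.

Lemma ler_enormD u v : enorm (u + v) <= enorm u + enorm v.
Proof.
rewrite -(ler_pXn2r (n := 2)) ?nnegrE ?addr_ge0 ?enorm_ge0 //.
rewrite sqrrD !enorm_sqr.
have -> : \sum_(i < d) (u + v) ord0 i ^+ 2 = \sum_(i < d) u ord0 i ^+ 2 +
    2 * (\sum_(i < d) u ord0 i * v ord0 i) + \sum_(i < d) v ord0 i ^+ 2.
  by rewrite mulr_sumr -!big_split /=; apply: eq_bigr => i _; rewrite mxE; ring.
rewrite lerD2r lerD2l; have := CauchySchwarz u v; lra.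
Qed.

Lemma ler_enormB u v : enorm (u - v) <= enorm u + enorm v.
Proof. by rewrite -(enormN v) ler_enormD. Qed.

End EuclideanNorm.

Section Gronwall.
Context {R : realType}.

Lemma is_derive_expR_scale (k x : R) :
  is_derive x 1 (fun y => expR (k * y)) (expR (k * x) * k).
Proof.
have lin : is_derive x 1 ( *%R k) k.
  rewrite [X in is_derive _ _ X](_ : _ = k *: id) //.
  exact: is_derive_eq (is_deriveZ k (is_derive_id x 1)) (mulr1 k).
exact: (is_derive1_comp (is_derive_expR _) lin).
Qed.

Lemma gronwall (g g' : R -> R) (k s t : R) :
  {within `[0, +oo[, continuous g} ->
  (forall x : R, 0 < x -> is_derive x 1 g (g' x)) ->
  (forall x, 0 < x -> g' x <= k * g x) ->
  0 <= s -> s <= t -> g t <= expR (k * (t - s)) * g s.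
Proof.
move=> g_cont dg g'_le s_ge0 st.
pose h (x : R) := expR (- k * x) * g x.
have dh (x : R) : 0 < x ->
    is_derive x 1 h (expR (- k * x) * g' x + g x * (expR (- k * x) * - k)).
  by move=> x_gt0; exact: (is_deriveM (is_derive_expR_scale (- k) x) (dg x x_gt0)).
have h_cont : {within `[0, +oo[, continuous h}.
  have -> : h = (fun y => expR (- k * y)) \* g by [].
  move=> x; apply: continuousM; last exact: g_cont.
  apply: continuous_subspaceT => y; apply/differentiable_continuous/derivable1_diffP.
  by case: (is_derive_expR_scale (- k) y).
have h_noninc : h t <= h s.
  apply: (ler0_derive1_nincry (a := 0)) => // x; rewrite in_itv /= andbT => x_gt0.
    by case: (dh x x_gt0).
  have dhx := dh x x_gt0; rewrite derive1E derive_val.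
  have := g'_le x x_gt0; have := expR_gt0 (- k * x); nra.
have gt_h : g t = expR (k * t) * h t.
  by rewrite /h mulrA -expRD mulNr addrN expR0 mul1r.
have gs_h : expR (k * (t - s)) * g s = expR (k * t) * h s.
  by rewrite /h mulrA -expRD; congr (expR _ * _); ring.
by rewrite gt_h gs_h ler_pM2l ?expR_gt0.
Qed.

End Gronwall.

Section RowDerivative.
Context {R : realType} {d : nat}.
Implicit Types (F : R -> 'rV[R]_d) (x : R) (dF : 'rV[R]_d).

Lemma is_derive_row_coord F x dF (i : 'I_d) :
  is_derive x 1 F dF -> is_derive x 1 (fun y => F y ord0 i) (dF ord0 i).
Proof.
move=> dFx; have F_der : derivable F x 1 by case: dFx.
apply: DeriveDef; first by move/derivable_mxP: F_der; apply.
have : 'D_1 F x = dF by apply: derive_val.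
by rewrite derive_mx // => <-; rewrite mxE.
Qed.

Lemma is_derive_enorm_sqr F x dF : is_derive x 1 F dF ->
  is_derive x 1 (fun y => enorm (F y) ^+ 2)
    (2 * \sum_(i < d) F x ord0 i * dF ord0 i).
Proof.
move=> dFx.
rewrite (_ : (fun y => _) = \sum_(i < d) (fun y => F y ord0 i) ^+ 2); last first.
  by apply/funext => y; rewrite enorm_sqr fct_sumE.
apply: is_derive_eq; first by apply: is_derive_sum => i; apply/is_deriveX/is_derive_row_coord.
by rewrite mulr_sumr; apply: eq_bigr => i _; rewrite /= expr1 /GRing.scale /= mulrA.
Qed.

Lemma continuous_enorm_sqr : continuous (fun v : 'rV[R]_d => enorm v ^+ 2).
Proof.
rewrite (_ : (fun v => _) = fun v : 'rV[R]_d => \sum_(i < d) v ord0 i ^+ 2); last first.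
  by apply/funext => v; rewrite enorm_sqr.
apply: (continuous_big (op := +%R)) => [|i _ v]; first exact: add_continuous.
exact: continuousM (@coord_continuous R 1 d ord0 i v) (@coord_continuous R 1 d ord0 i v).
Qed.

End RowDerivative.

Lemma mean_ode_dist_growth {R : realType} {d : nat} (fbar : 'rV[R]_d -> 'rV[R]_d)
    (thstar : 'rV[R]_d) (L : R) (vth : R -> 'rV[R]_d) (s t : R) :
  (forall th, enorm (fbar th) <= L * enorm (th - thstar)) ->
  is_mean_ode_solution fbar vth -> 0 <= s -> s <= t ->
  enorm (vth t - thstar) <= expR (L * (t - s)) * enorm (vth s - thstar).
Proof.
move=> fbar_le [vth_cont vth_der] s_ge0 st.
pose r y := enorm (vth y - thstar).
pose dr2 x := 2 * \sum_(i < d) (vth x - thstar) ord0 i * fbar (vth x) ord0 i.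
have r2_cont : {within `[0, +oo[, continuous (fun y => r y ^+ 2)}.
  have dist2_cont : continuous (fun v : 'rV[R]_d => enorm (v - thstar) ^+ 2).
    move=> v; apply: (@continuous_comp _ _ _ (fun w : 'rV[R]_d => w - thstar)
      (fun w : 'rV[R]_d => enorm w ^+ 2)); last exact: continuous_enorm_sqr.
    by apply: continuousB => //; exact: cst_continuous.
  by move=> x; apply: continuous_comp (vth_cont x) (dist2_cont _).
have r2_der (x : R) : 0 < x -> is_derive x 1 (fun y => r y ^+ 2) (dr2 x).
  move=> x_gt0; apply: is_derive_enorm_sqr.
  exact: is_derive_eq (is_deriveB (vth_der x x_gt0) (is_derive_cst thstar x 1)) (subr0 _).
have dr2_le (x : R) : 0 < x -> dr2 x <= 2 * L * r x ^+ 2.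
  move=> _; have := CauchySchwarz (vth x - thstar) (fbar (vth x)).
  have := fbar_le (vth x); have := enorm_ge0 (vth x - thstar); rewrite -/(r x).
  rewrite /dr2; nra.
have := gronwall r2_cont r2_der dr2_le s_ge0 st.
have -> : expR (2 * L * (t - s)) = expR (L * (t - s)) ^+ 2.
  by rewrite -expRM_natr; congr expR; ring.
by rewrite -exprMn ler_pXn2r ?nnegrE ?mulr_ge0 ?enorm_ge0 ?expR_ge0.
Qed.

Lemma enorm_le_lipschitz_root {R : realType} {d : nat} (g : 'rV[R]_d -> 'rV[R]_d)
    (L : R) (thstar th : 'rV[R]_d) :
  (forall th th', enorm (g th' - g th) <= L * enorm (th' - th)) -> g thstar = 0 ->
  enorm (g th) <= `|L| * enorm (th - thstar).
Proof.
move=> g_lip g_root; have := g_lip thstar th; rewrite g_root subr0 => /le_trans; apply.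
by rewrite ler_wpM2r ?enorm_ge0 ?ler_norm.
Qed.

Lemma lt_tau_c_dist {R : realType} {d : nat} (vth : R -> 'rV[R]_d) (thstar : 'rV[R]_d)
    (c y : R) :
  0 <= y -> (y%:E < tau_c vth thstar c)%E -> c < enorm (vth y - thstar).
Proof.
move=> y_ge0 y_lt; rewrite ltNge; apply/negP => dist_le.
have : (tau_c vth thstar c <= y%:E)%E by apply: ereal_inf_lbound; exists y.
by rewrite leNgt y_lt.
Qed.

Lemma exists_grid_bracket {R : realType} (T t : R) : 0 < T -> 0 < t ->
  exists j : nat, j%:R * T < t <= j.+1%:R * T.
Proof.
move=> T_gt0 t_gt0.
suff bracket n : t <= n%:R * T -> exists j : nat, j%:R * T < t <= j.+1%:R * T.
  apply: (bracket (Num.truncn (t / T)).+1).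
  by rewrite -ler_pdivrMr // ltW // truncnS_gt.
elim: n => [|n IHn]; first by rewrite mul0r => /(lt_le_trans t_gt0); rewrite ltxx.
by move=> t_le; case: (leP t (n%:R * T)) => [/IHn //|lt_t]; exists n; apply/andP.
Qed.

Lemma contraction_pow_le_expR {R : realType} (eps T t : R) (j : nat) :
  0 <= eps -> eps <= 1 -> 0 < T -> t <= j.+1%:R * T ->
  (1 - eps) ^+ j <= expR eps * expR (- (eps / T * t)).
Proof.
move=> eps_ge0 eps_le1 T_gt0 t_le.
apply: (@le_trans _ _ (expR (- eps) ^+ j)).
  by rewrite lerXn2r ?nnegrE ?subr_ge0 ?expR_ge0 // expR_ge1Dx.
rewrite -expRM_natr -expRD ler_expR.
have : eps / T * t <= eps * j.+1%:R.
  by rewrite mulrAC ler_pdivrMr // -mulrA ler_wpM2l.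
by rewrite -natr1 mulrDr mulr1; lra.
Qed.

Section LyapunovDecay.
Context {R : realType} {d : nat}.
Variables (fbar : 'rV[R]_d -> 'rV[R]_d) (V : 'rV[R]_d -> R).
Variables (L L_V delta0 delta T : R) (thstar : 'rV[R]_d).
Hypotheses (L_ge0 : 0 <= L) (delta0_gt0 : 0 < delta0) (delta_gt0 : 0 < delta).
Hypothesis T_gt0 : 0 < T.
Hypothesis fbar_le : forall th, enorm (fbar th) <= L * enorm (th - thstar).
Hypothesis V_lipschitz : forall th th', `|V th' - V th| <= L_V * enorm (th' - th).
Hypothesis V_ge_enorm : forall th, delta0^-1 <= enorm th -> enorm th <= V th.
Hypothesis V_drift : forall vth, is_mean_ode_solution fbar vth ->
  forall tau, 0 <= tau -> delta^-1 < enorm (vth tau) ->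
  V (vth (tau + T)) - V (vth tau) <= - (delta * enorm (vth tau)).

(* Far from [thstar], i.e. at distance more than [c], the state satisfies the
   hypotheses of (V4') and [1 <= enorm th]; there [V] grows at most like [K * enorm th],
   and the summand [delta + 1] of [K] keeps the contraction rate [eps] below 1. *)
Let a := enorm thstar.
Let c := 2 * a + 1 + delta^-1 + delta0^-1.
Let K := `|V thstar| + `|L_V| * (a + 1) + delta + 1.
Let eps := delta / K.

Let a_ge0 : 0 <= a. Proof. exact: enorm_ge0. Qed.

Let c_ge1 : 1 <= c.
Proof.
have : 0 < delta^-1 by rewrite invr_gt0.
have : 0 < delta0^-1 by rewrite invr_gt0.
rewrite /c; have := a_ge0; lra.
Qed.

Let K_ge : delta + 1 <= K.
Proof. by rewrite lerD2r lerDr addr_ge0 ?mulr_ge0 ?addr_ge0. Qed.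

Let K_gt0 : 0 < K.
Proof. by apply: lt_le_trans K_ge; rewrite addr_gt0. Qed.

Let eps_bounds : 0 < eps < 1.
Proof.
by rewrite divr_gt0 //= ltr_pdivrMr // mul1r (lt_le_trans _ K_ge) // ltrDl.
Qed.

Lemma far_enorm th : c < enorm (th - thstar) ->
  [/\ 1 <= enorm th, enorm (th - thstar) <= 2 * enorm th,
      delta^-1 < enorm th & delta0^-1 <= enorm th].
Proof.
have : 0 < delta^-1 by rewrite invr_gt0.
have : 0 < delta0^-1 by rewrite invr_gt0.
have := ler_enormB th thstar; have := a_ge0; rewrite -/a /c => *; split; lra.
Qed.

Lemma V_le_affine th : V th <= `|V thstar| + `|L_V| * enorm (th - thstar).
Proof.
have := V_lipschitz thstar th; have := ler_norm (V th - V thstar).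
have := ler_norm (V thstar); have := enorm_ge0 (th - thstar).
have := ler_norm L_V; nra.
Qed.

Lemma V_le_slope th : 1 <= enorm th -> V th <= K * enorm th.
Proof.
move=> th_ge1; have := V_le_affine th.
have : `|L_V| * enorm (th - thstar) <= `|L_V| * (enorm th + a).
  by rewrite ler_wpM2l // ler_enormB.
have : 0 <= `|V thstar| * (enorm th - 1) by rewrite mulr_ge0 ?subr_ge0.
have : 0 <= `|L_V| * (a * (enorm th - 1)) by rewrite !mulr_ge0 ?subr_ge0.
have : 0 <= (delta + 1) * enorm th by rewrite mulr_ge0 ?enorm_ge0 // addr_ge0 // ltW.
rewrite /K; nra.
Qed.

Lemma V_le_slope_dist th : 1 <= enorm (th - thstar) -> V th <= K * enorm (th - thstar).
Proof.
move=> dist_ge1; have := V_le_affine th.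
have : 0 <= `|V thstar| * (enorm (th - thstar) - 1) by rewrite mulr_ge0 ?subr_ge0.
have : 0 <= `|L_V| * (a * enorm (th - thstar)) by rewrite !mulr_ge0 ?enorm_ge0.
have : 0 <= (delta + 1) * enorm (th - thstar).
  by rewrite mulr_ge0 ?enorm_ge0 // addr_ge0 // ltW.
rewrite /K; nra.
Qed.

Section Trajectory.
Variable vth : R -> 'rV[R]_d.
Hypothesis vth_sol : is_mean_ode_solution fbar vth.

Lemma V_contract tau : 0 <= tau -> c < enorm (vth tau - thstar) ->
  V (vth (tau + T)) <= (1 - eps) * V (vth tau).
Proof.
move=> tau_ge0 /far_enorm[ge1 _ gt_delta _].
have := V_drift vth_sol tau_ge0 gt_delta.
have : eps * V (vth tau) <= delta * enorm (vth tau).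
  by rewrite /eps mulrAC ler_pdivrMr // -mulrA ler_pM2l // mulrC V_le_slope.
lra.
Qed.

Lemma V_grid_decay (j : nat) : ((j%:R * T)%:E < tau_c vth thstar c)%E ->
  V (vth (j%:R * T)) <= (1 - eps) ^+ j * V (vth 0).
Proof.
elim: j => [|j IHj] lt_tau; first by rewrite mul0r expr0 mul1r.
have jT_ge0 : 0 <= j%:R * T by rewrite mulr_ge0 // ltW.
have lt_tau' : ((j%:R * T)%:E < tau_c vth thstar c)%E.
  by apply: le_lt_trans lt_tau; rewrite lee_fin ler_wpM2r ?ler_nat // ltW.
rewrite -natr1 mulrDl mul1r exprS -mulrA.
apply: le_trans (V_contract jT_ge0 (lt_tau_c_dist jT_ge0 lt_tau')) _.
by rewrite ler_wpM2l ?IHj // subr_ge0 ltW //; case/andP: eps_bounds.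
Qed.

Lemma dist_grid_decay (j : nat) : ((j%:R * T)%:E < tau_c vth thstar c)%E ->
  enorm (vth (j%:R * T) - thstar) <= 2 * K * (1 - eps) ^+ j * enorm (vth 0 - thstar).
Proof.
move=> lt_tau; have jT_ge0 : 0 <= j%:R * T by rewrite mulr_ge0 // ltW.
have [_ dist_le _ delta0_le] := far_enorm (lt_tau_c_dist jT_ge0 lt_tau).
have lt_tau0 : ((0 : R)%:E < tau_c vth thstar c)%E.
  by apply: le_lt_trans lt_tau; rewrite lee_fin.
have dist0_ge1 : 1 <= enorm (vth 0 - thstar).
  by apply: le_trans c_ge1 (ltW (lt_tau_c_dist (lexx 0) lt_tau0)).
apply: (le_trans dist_le); rewrite -!mulrA ler_pM2l // mulrCA.
apply: le_trans (V_ge_enorm delta0_le) _; apply: le_trans (V_grid_decay lt_tau) _.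
rewrite ler_wpM2l ?exprn_ge0 ?subr_ge0 ?V_le_slope_dist //.
by apply: ltW; case/andP: eps_bounds.
Qed.

End Trajectory.

Theorem mean_ode_exp_stability : exists delta1 b c0 : R, [/\ 0 < delta1, 0 < b, 0 < c0 &
  forall vth, is_mean_ode_solution fbar vth ->
  forall t, 0 <= t -> (t%:E <= tau_c vth thstar c0)%E ->
  enorm (vth t - thstar) <= b * enorm (vth 0 - thstar) * expR (- (delta1 * t))].
Proof.
have [eps_gt0 eps_lt1] := andP eps_bounds.
have b_ge1 : 1 <= 2 * K * expR (L * T) * expR eps.
  have K_ge1 : 1 <= K by apply: le_trans K_ge; rewrite lerDr ltW.
  apply: mulr_ege1; last by rewrite -(expR0 R) ler_expR ltW.
  apply: mulr_ege1; last by rewrite -(expR0 R) ler_expR mulr_ge0 // ltW.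
  by apply: mulr_ege1; rewrite ?ler1n.
exists (eps / T), (2 * K * expR (L * T) * expR eps), c; split.
- by rewrite divr_gt0.
- exact: lt_le_trans ltr01 b_ge1.
- exact: lt_le_trans ltr01 c_ge1.
move=> vth vth_sol t t_ge0 le_tau.
have [->|t_neq0] := eqVneq t 0.
  by rewrite mulr0 oppr0 expR0 mulr1 ler_peMl ?enorm_ge0.
have t_gt0 : 0 < t by rewrite lt_def t_neq0.
have [j /andP[jT_lt t_le]] := exists_grid_bracket T_gt0 t_gt0.
have jT_ge0 : 0 <= j%:R * T by rewrite mulr_ge0 // ltW.
have lt_tau : ((j%:R * T)%:E < tau_c vth thstar c)%E.
  by apply: lt_le_trans le_tau; rewrite lte_fin.
have growth := mean_ode_dist_growth fbar_le vth_sol jT_ge0 (ltW jT_lt).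
have exp_le : expR (L * (t - j%:R * T)) <= expR (L * T).
  by rewrite ler_expR ler_wpM2l // lerBlDl -[X in _ + X]mul1r -mulrDl natr1.
have pow_le := contraction_pow_le_expR (ltW eps_gt0) (ltW eps_lt1) T_gt0 t_le.
have grid_le : enorm (vth (j%:R * T) - thstar) <=
    2 * K * (expR eps * expR (- (eps / T * t))) * enorm (vth 0 - thstar).
  apply: le_trans (dist_grid_decay vth_sol lt_tau) _.
  by rewrite ler_wpM2r ?enorm_ge0 // ler_wpM2l // mulr_ge0 // ltW.
apply: le_trans growth _.
apply: le_trans (ler_pM (expR_ge0 _) (enorm_ge0 _) exp_le grid_le) _.
lra.
Qed.

End LyapunovDecay.

Theorem lemmaA10 (R : realType) (d m : nat)
  (f : 'rV[R]_d -> 'rV[R]_m -> 'rV[R]_d) (fbar : 'rV[R]_d -> 'rV[R]_d)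
  (* (A1) *)
  (L_f : R)
  (hA1bar : forall th th' : 'rV[R]_d, enorm (fbar th' - fbar th) <= L_f * enorm (th' - th))
  (hA1 : forall (th th' : 'rV[R]_d) (xi xi' : 'rV[R]_m),
      enorm (f th' xi - f th xi) + enorm (f th xi' - f th xi)
        <= L_f * (enorm (th' - th) + enorm (xi' - xi)))
  (* (V4') *)
  (V : 'rV[R]_d -> R) (L_V delta0 delta T : R)
  (hV0 : forall th, 0 <= V th)
  (hd0 : 0 < delta0) (hd : 0 < delta) (hT : 0 < T)
  (hVlip : forall th th', `|V th' - V th| <= L_V * enorm (th' - th))
  (hVgrow : forall th, delta0^-1 <= enorm th -> enorm th <= V th)
  (hVdrift : forall vth : R -> 'rV[R]_d, is_mean_ode_solution fbar vth ->
      forall tau : R, 0 <= tau -> delta^-1 < enorm (vth tau) ->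
      V (vth (tau + T)) - V (vth tau) <= - (delta * enorm (vth tau)))
  (* equilibrium *)
  (thstar : 'rV[R]_d) (hstar : fbar thstar = 0) :
  exists delta1 b c : R, [/\ 0 < delta1, 0 < b, 0 < c &
    forall vth : R -> 'rV[R]_d, is_mean_ode_solution fbar vth ->
      forall t : R, 0 <= t -> ((t%:E <= tau_c vth thstar c)%E) ->
        enorm (vth t - thstar) <= b * enorm (vth 0 - thstar) * expR (- (delta1 * t))].
Proof.
have fbar_le th := enorm_le_lipschitz_root th hA1bar hstar.
exact: mean_ode_exp_stability (normr_ge0 L_f) hd0 hd hT fbar_le hVlip hVgrow hVdrift.
Qed.
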